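(* For any stochastic CA $\mathcal{A}=(Q,R,V,V',f)$ there is a plain probabilistic cellular automaton (PCA) $\mathcal{B}$ such that $\mathcal{A}\sqsubseteq^S_i\mathcal{B}$.
   Context: A stochastic CA is $(Q,R,V,V',f)$ with $Q$ finite states, $R$ finite random symbols, $V=\{v_1,\dots,v_r\}$, $V'=\{v'_1,\dots,v'_{r'}\}$ finite subsets of $\mathbb{Z}$, $f:Q^r\times R^{r'}\to Q$; explicit global function $F(c,s)_z=f((c_{z+v_1},\dots,c_{z+v_r}),(s_{z+v'_1},\dots,s_{z+v'_{r'}}))$ for $c\in Q^{\mathbb{Z}},s\in R^{\mathbb{Z}}$. It is a PCA if $V'=\{0\}$. $\nu_R$ is the uniform Bernoulli measure on $R^{\mathbb{Z}}$; the stochastic global function $S_F$ maps $c$ to the law of $F(c,s)$, $s\sim\nu_R$ (i.e. $S_F(c)([u]_z)=\nu_R\{s:F(c,s)\in[u]_z\}$ on cylinders $[u]_z$). Iterates: $F^{t+1}(c,s^1,\dots,s^{t+1})=F(F^t(c,s^1,\dots,s^t),s^{t+1})$, $F^0(c)=c$. Restriction: if $i:Q'\to Q$ is injective and $Y=i(Q')^{\mathbb{Z}}$ satisfies $F(Y,R^{\mathbb{Z}})\subseteq Y$, the $i$-restriction of $\mathcal{A}$ is the stochastic CA with states $Q'$, random symbols $R$ and explicit global function $F_i(c,s)=I^{-1}(F(I(c),s))$, $I$ the cellwise extension of $i$. Rescaling: for $m,t\ge1$, $k\in\mathbb{Z}$, the rescaling $\mathcal{A}^{\langle m,t,k\rangle}$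 has states $Q^m$, random symbols $(R^m)^t$, and explicit global function $F^{\langle m,t,k\rangle}(c,s)=b_m\circ\sigma_k\circ F^t(b_m^{-1}(c),b_m^{-1}(s^1),\dots,b_m^{-1}(s^t))$, where $s^i\in(R^m)^{\mathbb{Z}}$ with $s^i_j=(s_j)_i$, $\sigma_k(c)_z=c_{z+k}$, and $b_m(c)_z=(c_{mz},\dots,c_{mz+m-1})$. $\mathcal{A}_1\sqsubseteq^S_i\mathcal{A}_2$ means there exist $m_1,m_2,t_1,t_2,k_1,k_2$ and an $i$-restriction $\mathcal{C}$ of $\mathcal{A}_2^{\langle m_2,t_2,k_2\rangle}$ such that $\mathcal{A}_1^{\langle m_1,t_1,k_1\rangle}$ and $\mathcal{C}$ have the same stochastic global function. *)

From mathcomp Require Import all_boot all_order all_algebra.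
Set Implicit Arguments. Unset Strict Implicit. Unset Printing Implicit Defensive.
Import Order.TTheory GRing.Theory Num.Theory.
Local Open Scope ring_scope.

(** V = (v_1..v_r), V' = (v'_1..v'_{r'}) are listed as duplicate-free tuples
    (finite subsets of Z with a fixed enumeration, as in the paper). *)
Record sca (Q R : finType) := SCA {
  nb : nat;
  nbr : nat;
  nbhd : nb.-tuple int;
  rnbhd : nbr.-tuple int;
  nbhd_uniq : uniq nbhd;
  rnbhd_uniq : uniq rnbhd;
  lrule : nb.-tuple Q -> nbr.-tuple R -> Q
}.

Definition is_PCA (Q R : finType) (A : sca Q R) : Prop := val (rnbhd A) = [:: 0%Z].

Definition gfun (Q R : finType) (A : sca Q R) (c : int -> Q) (s : int -> R) : int -> Q :=
  fun z => @lrule _ _ A [tuple c (z + tnth (nbhd A) j) | j < nb A]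
                   [tuple s (z + tnth (rnbhd A) j) | j < nbr A].

Definition iterG (Q R : Type) (G : (int -> Q) -> (int -> R) -> (int -> Q))
  (c : int -> Q) (ss : seq (int -> R)) : int -> Q :=
  foldl (fun c' s => G c' s) c ss.

Definition shift (T : Type) (k : int) (c : int -> T) : int -> T := fun z => c (z + k).

Definition block (T : Type) (m : nat) (c : int -> T) : int -> m.-tuple T :=
  fun z => [tuple c (m%:Z * z + j%:Z) | j < m].

Lemma absz_mod_lt (m : nat) (hm : (0 < m)%N) (z : int) : (absz (z %% m%:Z)%Z < m)%N.
Proof.
have h0 : (0 <= (z %% m%:Z)%Z) by rewrite modz_ge0 // eqz_nat -lt0n.
have h1 : ((z %% m%:Z)%Z < m%:Z) by rewrite ltz_pmod // ltz_nat.
by rewrite -ltz_nat gez0_abs.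
Qed.

Definition unblock (T : Type) (m : nat) (hm : (0 < m)%N) (c : int -> m.-tuple T) : int -> T :=
  fun z => tnth (c (z %/ m%:Z)%Z) (Ordinal (absz_mod_lt hm z)).

(** explicit global function of the rescaling A^<m,t,k> (m = block size,
    t = number of time steps, k = shift), given the global function G of A *)
Definition rescale (Q R : Type) (G : (int -> Q) -> (int -> R) -> (int -> Q))
  (m : nat) (hm : (0 < m)%N) (t : nat) (k : int)
  (c : int -> m.-tuple Q) (s : int -> t.-tuple (m.-tuple R)) : int -> m.-tuple Q :=
  block m (shift k (iterG G (unblock hm c)
     [seq unblock hm (fun j => tnth (s j) i) | i <- enum 'I_t])).
Arguments rescale {Q R} G {m} hm t k c s.

Definition invariant (Q' Q R : Type) (i : Q' -> Q)
  (G : (int -> Q) -> (int -> R) -> (int -> Q)) : Prop :=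
  forall c s, (forall z, exists x, c z = i x) -> forall z, exists x, G c s z = i x.

(** i-restriction: F_i(c,s) = I^{-1}(F(I(c),s)) (the fallback branch is never
    used when Y is invariant and i is injective). *)
Definition restr (Q' : finType) (Q : eqType) (R : Type) (i : Q' -> Q)
  (G : (int -> Q) -> (int -> R) -> (int -> Q)) : (int -> Q') -> (int -> R) -> (int -> Q') :=
  fun c s z => match [pick x | i x == G (fun y => i (c y)) s z] with
               | Some x => x | None => c z end.

Definition cyl (Q : Type) (z : int) (u : seq Q) (x : int -> Q) : Prop :=
  [seq x (z + j%:Z) | j <- iota 0 (size u)] = u.

(** The uniform Bernoulli measure nu_R on events depending only on the
    window [a, a+n): nu_R(E) = #{w in R^n | [w]_a ⊆ E} / |R|^n. *)
Definition agrees (R : Type) (n : nat) (a : int) (w : n.-tuple R) (s : int -> R) : Prop :=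
  forall j : 'I_n, s (a + j%:Z) = tnth w j.

Definition determined (R : Type) (E : (int -> R) -> Prop) (a : int) (n : nat) : Prop :=
  forall s1 s2 : int -> R, (forall j : 'I_n, s1 (a + j%:Z) = s2 (a + j%:Z)) -> (E s1 <-> E s2).

Definition has_prob (R : finType) (E : (int -> R) -> Prop) (p : rat) : Prop :=
  exists (a : int) (n : nat) (S : {set n.-tuple R}),
    determined E a n /\
    (forall w, w \in S <-> (forall s, agrees a w s -> E s)) /\
    p = (#|S|%:R / (#|R| ^ n)%:R)%R.

(** same stochastic global function: for every c, the laws of G1(c,.) under
    nu_R1 and G2(c,.) under nu_R2 agree on every cylinder (hence are equal) *)
Definition same_sgf (Q : Type) (R1 R2 : finType)
  (G1 : (int -> Q) -> (int -> R1) -> (int -> Q))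
  (G2 : (int -> Q) -> (int -> R2) -> (int -> Q)) : Prop :=
  forall (c : int -> Q) (z : int) (u : seq Q), exists p : rat,
    has_prob (fun s => cyl z u (G1 c s)) p /\ has_prob (fun s => cyl z u (G2 c s)) p.

Definition simulated_by (QA RA QB RB : finType) (A : sca QA RA) (B : sca QB RB) : Prop :=
  exists (m1 : nat) (h1 : (0 < m1)%N) (m2 : nat) (h2 : (0 < m2)%N)
         (t1 t2 : nat) (k1 k2 : int),
    (0 < t1)%N /\ (0 < t2)%N /\
    exists i : m1.-tuple QA -> m2.-tuple QB,
      injective i /\
      invariant i (rescale (gfun B) h2 t2 k2) /\
      same_sgf (rescale (gfun A) h1 t1 k1) (restr i (rescale (gfun B) h2 t2 k2)).

(** The random neighbourhood V' of A is simulated by two steps of a PCA whose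
    cells carry a slot for one random symbol next to their A-state.  In the
    first step every cell only draws its own random symbol into the empty slot;
    in the second step every cell applies f, reading the A-states of its
    V-neighbours and the stored symbols of its V'-neighbours, and empties its
    slot again.  Restricted to the configurations with empty slots and rescaled
    by t = 2, this is F with the random field of the first step, while the
    random field of the second step is ignored; a marginal of a uniform
    Bernoulli measure is uniform, so the stochastic global functions agree. *)

From Pilot Require Import Defs.
From mathcomp Require Import all_boot all_order all_algebra zify.
From Stdlib Require Import FunctionalExtensionality ClassicalEpsilon.
Set Implicit Arguments. Unset Strict Implicit. Unset Printing Implicit Defensive.
Import Order.TTheory GRing.Theory Num.Theory.
Local Open Scope ring_scope.

Section PCAOfSCA.
Variables (Q R : finType) (A : sca Q R).

Definition pca_state := (Q * option R)%type.

Definition pca_offsets_nonzero : seq int := undup [seq v <- nbhd A ++ rnbhd A | v != 0%Z].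

Definition pca_nbhd : (size pca_offsets_nonzero).+1.-tuple int :=
  cons_tuple 0%Z (in_tuple pca_offsets_nonzero).

Lemma pca_nbhd_uniq : uniq pca_nbhd.
Proof. by rewrite /= undup_uniq andbT mem_undup mem_filter eqxx. Qed.

Lemma mem_pca_nbhd v : v \in val (nbhd A) ++ val (rnbhd A) -> v \in val pca_nbhd.
Proof. by move=> hv; rewrite /= in_cons mem_undup mem_filter hv andbT orbN. Qed.

(* The fallback symbol [tnth r ord0] under [odflt] is never read: in the second
   step every slot is full. *)
Definition pca_rule (x : (size pca_offsets_nonzero).+1.-tuple pca_state)
    (r : 1.-tuple R) : pca_state :=
  let at_offset v := nth (tnth x ord0) x (index v pca_nbhd) in
  if (tnth x ord0).2 is Some _ then
    (lrule [tuple (at_offset (tnth (nbhd A) j)).1 | j < nb A]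
           [tuple odflt (tnth r ord0) (at_offset (tnth (rnbhd A) j)).2 | j < nbr A], None)
  else ((tnth x ord0).1, Some (tnth r ord0)).

Definition pca_of_sca : sca pca_state R :=
  @SCA pca_state R _ _ pca_nbhd [tuple 0%Z] pca_nbhd_uniq erefl pca_rule.

Lemma pca_of_sca_is_PCA : is_PCA pca_of_sca.
Proof. by []. Qed.

Lemma nth_pca_window (c : int -> pca_state) z v d : v \in val pca_nbhd ->
  nth d [tuple c (z + tnth pca_nbhd j) | j < _] (index v pca_nbhd) = c (z + v).
Proof.
move=> hv.
have -> : [tuple c (z + tnth pca_nbhd j) | j < _] = map_tuple (fun w => c (z + w)) pca_nbhd.
  by apply: eq_from_tnth => j; rewrite !tnth_map tnth_ord_tuple.
rewrite (_ : tval (map_tuple _ _) = map (fun w => c (z + w)) pca_nbhd) //.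
by rewrite (nth_map 0%Z) ?nth_index // index_mem.
Qed.

Lemma gfun_pca_draw c s z : (c z).2 = None ->
  gfun pca_of_sca c s z = ((c z).1, Some (s z)).
Proof. by rewrite /gfun /= /pca_rule !tnth_map !tnth_ord_tuple /= !addr0 => ->. Qed.

Lemma gfun_pca_apply c s z (q : int -> Q) (r : int -> R) :
  (forall y, c y = (q y, Some (r y))) ->
  gfun pca_of_sca c s z = (gfun A q r z, None).
Proof.
move=> hc; rewrite /gfun /= /pca_rule !tnth_map !tnth_ord_tuple /= addr0 hc /=.
congr (lrule _ _, _); apply: eq_from_tnth => j; rewrite !tnth_map !tnth_ord_tuple.
  by rewrite nth_pca_window ?hc // mem_pca_nbhd // mem_cat mem_tnth.
by rewrite nth_pca_window ?hc // mem_pca_nbhd // mem_cat mem_tnth orbT.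
Qed.

End PCAOfSCA.

Lemma unblock1 (T : Type) (h : (0 < 1)%N) (c : int -> 1.-tuple T) z :
  unblock h c z = tnth (c z) ord0.
Proof. by rewrite /unblock divz1; congr tnth; apply: val_inj; rewrite /= modz1. Qed.

Lemma rescale1 (Q R : Type) (G : (int -> Q) -> (int -> R) -> int -> Q) (h : (0 < 1)%N) t c s z :
  rescale G h t 0 c s z =
  [tuple iterG G (fun y => tnth (c y) ord0)
      [seq (fun y => tnth (tnth (s y) i) ord0) | i <- enum 'I_t] z].
Proof.
apply: eq_from_tnth => j; rewrite /rescale /block !tnth_map !tnth_ord_tuple (ord1 j).
rewrite /= mul1r addr0 /shift addr0.
have unblockE (T : Type) (d : int -> 1.-tuple T) : unblock h d = fun y => tnth (d y) ord0.
  by apply: functional_extensionality => y; rewrite unblock1.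
by rewrite unblockE; congr (iterG _ _ _ _); apply: eq_map => i; rewrite unblockE.
Qed.

Arguments gfun : simpl never.

Section Simulation.
Variables (Q R : finType) (A : sca Q R).

Definition empty_slot (x : 1.-tuple Q) : 1.-tuple (pca_state Q R) := [tuple (tnth x ord0, None)].

Lemma empty_slot_inj : injective empty_slot.
Proof.
move=> x y /(congr1 (fun t => (tnth t ord0).1)) /= e.
by apply: eq_from_tnth => j; rewrite (ord1 j).
Qed.

Definition first_step_noise (w : 2.-tuple (1.-tuple R)) : 1.-tuple (1.-tuple R) :=
  [tuple tnth w ord0].

Lemma rescale_pca_empty_slot (h : (0 < 1)%N) c s z :
  rescale (gfun (pca_of_sca A)) h 2 0 (fun y => empty_slot (c y)) s z =
  empty_slot (rescale (gfun A) h 1 0 c (fun y => first_step_noise (s y)) z).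
Proof.
rewrite !rescale1 enum_ordSl enum_ordSl enum_ord0 /iterG /=.
rewrite (@gfun_pca_apply _ _ A _ _ z (fun y => tnth (c y) ord0)
                                     (fun y => tnth (tnth (s y) ord0) ord0)) //.
by move=> y; rewrite gfun_pca_draw.
Qed.

Lemma restr_rescale_pca (h : (0 < 1)%N) c s :
  restr empty_slot (rescale (gfun (pca_of_sca A)) h 2 0) c s =
  rescale (gfun A) h 1 0 c (fun y => first_step_noise (s y)).
Proof.
apply: functional_extensionality => z; rewrite /restr.
case: pickP => [x /eqP ex | /(_ (rescale (gfun A) h 1 0 c (fun y => first_step_noise (s y)) z))].
  by apply: empty_slot_inj; rewrite ex rescale_pca_empty_slot.
by rewrite rescale_pca_empty_slot eqxx.
Qed.

Lemma invariant_rescale_pca (h : (0 < 1)%N) :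
  Defs.invariant empty_slot (rescale (gfun (pca_of_sca A)) h 2 0).
Proof.
move=> c s hc z.
have -> : c = fun y => empty_slot [tuple (tnth (c y) ord0).1].
  apply: functional_extensionality => y; have [x ->] := hc y.
  by apply: eq_from_tnth => j; rewrite (ord1 j).
by rewrite rescale_pca_empty_slot; eexists.
Qed.

End Simulation.

Definition classic_bool (P : Prop) : bool := if excluded_middle_informative P then true else false.

Lemma classic_boolP (P : Prop) : classic_bool P <-> P.
Proof. by rewrite /classic_bool; case: excluded_middle_informative. Qed.

Definition extend_window (R : Type) (r0 : R) (a : int) (n : nat) (w : n.-tuple R) : int -> R :=
  fun z => if 0 <= z - a then nth r0 w (absz (z - a)) else r0.

Lemma agrees_extend_window (R : Type) r0 a n (w : n.-tuple R) : agrees a w (extend_window r0 a w).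
Proof.
move=> j; rewrite /extend_window (_ : a + j%:Z - a = j%:Z); last by lia.
by rewrite lez_nat (tnth_nth r0).
Qed.

Lemma has_prob_determined (R : finType) (r0 : R) (E : (int -> R) -> Prop) a n :
  determined E a n -> exists p, has_prob E p.
Proof.
move=> hE; pose S := [set w : n.-tuple R | classic_bool (E (extend_window r0 a w))].
exists (#|S|%:R / (#|R| ^ n)%:R); exists a, n, S; split=> //; split=> // w.
rewrite inE classic_boolP; split=> [Ew s sw | ]; last by apply; apply: agrees_extend_window.
by apply/(hE (extend_window r0 a w)) => // j; rewrite agrees_extend_window sw.
Qed.

Section Marginal.
Variables (R2 R1 K : finType) (f : R2 -> R1 * K) (g : R1 * K -> R2).
Hypotheses (fK : cancel f g) (gK : cancel g f).
Variable x0 : R2.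

Lemma card_bij_prod : #|R2| = (#|R1| * #|K|)%N.
Proof. by rewrite -card_prod; apply: (bij_eq_card (f := f)); exists g. Qed.

Lemma card_window_preimage n (S : {set n.-tuple R1}) :
  #|[set w : n.-tuple R2 | map_tuple (fun x => (f x).1) w \in S]| = (#|S| * #|K| ^ n)%N.
Proof.
pose split_window (w : n.-tuple R2) :=
  (map_tuple (fun x => (f x).1) w, map_tuple (fun x => (f x).2) w).
have split_inj : injective split_window.
  move=> w w' e; apply: eq_from_tnth => j; apply: (can_inj fK).
  have := congr1 (fun t => tnth t.1 j) e; have := congr1 (fun t => tnth t.2 j) e.
  rewrite /= !tnth_map => e2 e1.
  by rewrite [f _]surjective_pairing e1 e2 -surjective_pairing.
rewrite -(card_imset _ split_inj) -card_tuple -cardsT -cardsX; congr #|pred_of_set _|.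
apply/setP => -[w1 w2]; rewrite !inE andbT; apply/imsetP/idP.
  by case=> w; rewrite inE => wS [-> _].
move=> w1S; exists [tuple g (tnth w1 j, tnth w2 j) | j < n].
  rewrite inE; congr (_ \in S): w1S.
  by apply: eq_from_tnth => j; rewrite !tnth_map tnth_ord_tuple gK.
by congr (_, _); apply: eq_from_tnth => j; rewrite !tnth_map tnth_ord_tuple gK.
Qed.

Lemma has_prob_marginal (E : (int -> R1) -> Prop) p :
  has_prob E p -> has_prob (fun s => E (fun z => (f (s z)).1)) p.
Proof.
case=> a [n [S [hE [hS ->]]]].
exists a, n, [set w : n.-tuple R2 | map_tuple (fun x => (f x).1) w \in S]; split; [|split].
- by move=> s1 s2 s12; apply: hE => j; rewrite s12.
- move=> w; rewrite inE hS; split=> [wS s sw | wE s1 s1w].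
    by apply: wS => j; rewrite tnth_map sw.
  pose s z := g (s1 z, (f (extend_window x0 a w z)).2).
  have -> : s1 = fun z => (f (s z)).1 by apply: functional_extensionality => z; rewrite gK.
  apply: wE => j; rewrite /s agrees_extend_window s1w tnth_map.
  by rewrite -surjective_pairing fK.
- have K_gt0 : (0 < #|K|)%N by apply/card_gt0P; exists (f x0).2.
  rewrite card_window_preimage card_bij_prod expnMn !natrM invfM mulrACA mulfV ?mulr1 //.
  by rewrite pnatr_eq0 -lt0n expn_gt0 K_gt0.
Qed.

End Marginal.

Lemma has_prob_first_step_noise (R : finType) (r0 : R) (E : (int -> 1.-tuple (1.-tuple R)) -> Prop) p :
  has_prob E p -> has_prob (fun s => E (fun z => first_step_noise (s z))) p.
Proof.
pose g (ab : 1.-tuple (1.-tuple R) * 1.-tuple R) : 2.-tuple (1.-tuple R) :=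
  [tuple tnth ab.1 ord0; ab.2].
have fK : cancel (fun w => (first_step_noise w, tnth w ord_max)) g.
  move=> w; apply: eq_from_tnth => -[[|[|//]] ?];
  by rewrite /first_step_noise !(tnth_nth [tuple r0]).
have gK : cancel g (fun w => (first_step_noise w, tnth w ord_max)).
  by move=> [a b] /=; congr (_, _); apply: eq_from_tnth => j; rewrite (ord1 j).
exact: (has_prob_marginal fK gK [tuple [tuple r0]; [tuple r0]]).
Qed.

Definition rnbhd_radius (Q R : finType) (A : sca Q R) : nat :=
  (\max_(k < nbr A) absz (tnth (rnbhd A) k))%N.

Lemma gfun_eq_window (Q R : finType) (A : sca Q R) c s1 s2 y :
  (forall k, s1 (y + tnth (rnbhd A) k) = s2 (y + tnth (rnbhd A) k)) ->
  gfun A c s1 y = gfun A c s2 y.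
Proof. by move=> s12; rewrite /gfun; congr lrule; apply: eq_mktuple. Qed.

Lemma cyl_rescale1_determined (Q R : finType) (A : sca Q R) (h : (0 < 1)%N) c z
    (u : seq (1.-tuple Q)) :
  determined (fun s => cyl z u (rescale (gfun A) h 1 0 c s))
             (z - (rnbhd_radius A)%:Z) (size u + 2 * rnbhd_radius A)%N.
Proof.
set M := rnbhd_radius A; move=> s1 s2 s12.
suff e : {in iota 0 (size u), (fun j => rescale (gfun A) h 1 0 c s1 (z + j%:Z)) =1
                               (fun j => rescale (gfun A) h 1 0 c s2 (z + j%:Z))}.
  by rewrite /cyl; move/eq_in_map: e => ->.
move=> j; rewrite mem_iota add0n => ju; rewrite !rescale1 enum_ordSl enum_ord0 /iterG /=.
congr [tuple _]; apply: gfun_eq_window => k.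
have vM : (absz (tnth (rnbhd A) k) <= M)%N.
  exact: (leq_bigmax (F := fun k => absz (tnth (rnbhd A) k))).
set y := z + j%:Z + tnth (rnbhd A) k.
have y_in : (absz (y - (z - M%:Z))%R < size u + 2 * M)%N by rewrite /y; lia.
have := s12 (Ordinal y_in); rewrite /= (_ : z - M%:Z + (absz (y - (z - M%:Z))%R)%:Z = y).
  by move=> ->.
by rewrite /y; lia.
Qed.

Theorem theorem3 (Q R : finType) (HR : (0 < #|R|)%N) (A : sca Q R) :
  exists (QB RB : finType), (0 < #|RB|)%N /\
    exists B : sca QB RB, is_PCA B /\ simulated_by A B.
Proof.
have [r0 _] := card_gt0P HR.
exists (pca_state Q R), R; split=> //; exists (pca_of_sca A).
split; first exact: pca_of_sca_is_PCA.
exists 1%N, (ltn0Sn 0), 1%N, (ltn0Sn 0), 1%N, 2%N, 0, 0; split=> //; split=> //.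
exists (@empty_slot Q R); split; first exact: empty_slot_inj.
split; first exact: invariant_rescale_pca.
move=> c z u.
have [p hp] := has_prob_determined [tuple [tuple r0]]
  (@cyl_rescale1_determined _ _ A (ltn0Sn 0) c z u).
exists p; split=> //.
under [X in has_prob X _]functional_extensionality => s do rewrite restr_rescale_pca.
exact: has_prob_first_step_noise r0 _ _ hp.
Qed.
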